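(* There exists a universal constant $C>0$ such that the following holds. Let $S,T$ be commuting invertible maps of a set $X$ and $f_1,f_2,f_3:X\to\mathbb R$ with $\sup|f_i|\le 1$, $i=1,2,3$. Then for every $x\in X$ and every $N\in\mathbb N$, \[\Big(\frac{1}{N^2}\sum_{i=0}^{N-1}\sum_{j=0}^{N-1}f_1(S^ix)f_2(T^jx)f_3(S^iT^jx)\Big)^4\le C\,S_N(f_3,x),\] where $A_N=\{(i,j,k,p)\in\mathbb Z^4: i,j\in[0,N-1],\ k\in[-i,N-1-i],\ p\in[-j,N-1-j]\}$ and \[S_N(f,x)=\Big|\frac{1}{N^4}\sum_{(i,j,k,p)\in A_N} f(S^iT^jx)f(S^{i+k}T^jx)f(S^iT^{j+p}x)f(S^{i+k}T^{j+p}x)\Big|.\] *)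

From Stdlib Require Import Reals ZArith List.
Open Scope R_scope.

Definition zpow {X : Type} (f finv : X -> X) (z : Z) : X -> X :=
  match z with
  | Z0 => fun x => x
  | Zpos p => Nat.iter (Pos.to_nat p) f
  | Zneg p => Nat.iter (Pos.to_nat p) finv
  end.

(* The integers a, a+1, ..., b (empty if b < a). *)
Definition zrange (a b : Z) : list Z :=
  map (fun n => (a + Z.of_nat n)%Z) (seq 0 (Z.to_nat (b - a + 1))).

Definition zsum (a b : Z) (F : Z -> R) : R :=
  fold_right Rplus 0 (map F (zrange a b)).

Definition avg3 {X : Type} (S Sinv T Tinv : X -> X) (f1 f2 f3 : X -> R)
  (N : nat) (x : X) : R :=
  / (INR N ^ 2) *
  zsum 0 (Z.of_nat N - 1) (fun i =>
  zsum 0 (Z.of_nat N - 1) (fun j =>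
    f1 (zpow S Sinv i x) * f2 (zpow T Tinv j x) *
    f3 (zpow S Sinv i (zpow T Tinv j x)))).

Definition SN {X : Type} (S Sinv T Tinv : X -> X) (f : X -> R)
  (N : nat) (x : X) : R :=
  let M := (Z.of_nat N - 1)%Z in
  let P a b := zpow S Sinv a (zpow T Tinv b x) in
  Rabs (/ (INR N ^ 4) *
    zsum 0 M (fun i =>
    zsum 0 M (fun j =>
    zsum (- i) (M - i) (fun k =>
    zsum (- j) (M - j) (fun p =>
      f (P i j) * f (P (i + k)%Z j) * f (P i (j + p)%Z)
        * f (P (i + k)%Z (j + p)%Z)))))).

(* With c(i,j) := f3(S^i T^j x), the average is sum_i f1(S^i x) B(i) with
   B(i) := sum_j f2(T^j x) c(i,j).  Cauchy-Schwarz in i, using |f1| <= 1, bounds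
   its square by N sum_{j,j'} f2(T^j x) f2(T^j' x) D(j,j'), where
   D(j,j') := sum_i c(i,j) c(i,j'); Cauchy-Schwarz once more in (j,j'), using
   |f2| <= 1, bounds the square of that by N^2 sum_{j,j'} D(j,j')^2, which
   expands to the box sum sum_{i,k,j,j'} c(i,j) c(k,j) c(i,j') c(k,j').  After
   the shifts k -> i+k, p -> j+p this box sum is N^4 S_N(f3,x), so C = 1. *)

From Stdlib Require Import Reals ZArith List Lra Psatz Morphisms.
Open Scope R_scope.

Definition lsum {I : Type} (L : list I) (F : I -> R) : R :=
  fold_right Rplus 0 (map F L).

Lemma lsum_nil {I : Type} (F : I -> R) : lsum nil F = 0.
Proof. reflexivity. Qed.

Lemma lsum_cons {I : Type} (a : I) L (F : I -> R) :
  lsum (a :: L) F = F a + lsum L F.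
Proof. reflexivity. Qed.

Lemma lsum_ext {I : Type} L (F G : I -> R) :
  (forall i, F i = G i) -> lsum L F = lsum L G.
Proof. intro H; unfold lsum; f_equal; apply map_ext, H. Qed.

#[export] Instance lsum_proper {I : Type} :
  Proper (eq ==> pointwise_relation I eq ==> eq) (@lsum I).
Proof. intros L ? <- F G H; apply lsum_ext, H. Qed.

Lemma lsum_plus {I : Type} L (F G : I -> R) :
  lsum L (fun i => F i + G i) = lsum L F + lsum L G.
Proof. induction L; rewrite ?lsum_nil, ?lsum_cons, ?IHL; ring. Qed.

Lemma lsum_minus {I : Type} L (F G : I -> R) :
  lsum L (fun i => F i - G i) = lsum L F - lsum L G.
Proof. induction L; rewrite ?lsum_nil, ?lsum_cons, ?IHL; ring. Qed.

Lemma lsum_scal {I : Type} L (c : R) (F : I -> R) :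
  lsum L (fun i => c * F i) = c * lsum L F.
Proof. induction L; rewrite ?lsum_nil, ?lsum_cons, ?IHL; ring. Qed.

Lemma lsum_le {I : Type} L (F G : I -> R) :
  (forall i, F i <= G i) -> lsum L F <= lsum L G.
Proof.
  intro H; induction L; rewrite ?lsum_nil, ?lsum_cons; [lra|].
  specialize (H a); lra.
Qed.

Lemma lsum_nonneg {I : Type} L (F : I -> R) :
  (forall i, 0 <= F i) -> 0 <= lsum L F.
Proof.
  intro H; induction L; rewrite ?lsum_nil, ?lsum_cons; [lra|].
  specialize (H a); lra.
Qed.

Lemma lsum_const {I : Type} (L : list I) c :
  lsum L (fun _ => c) = c * INR (length L).
Proof.
  induction L; rewrite ?lsum_nil, ?lsum_cons; simpl length; [simpl; ring|].
  rewrite IHL, S_INR; ring.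
Qed.

Lemma lsum_app {I : Type} (L K : list I) F :
  lsum (L ++ K) F = lsum L F + lsum K F.
Proof. induction L; simpl app; rewrite ?lsum_nil, ?lsum_cons, ?IHL; ring. Qed.

Lemma lsum_map {I J : Type} (L : list J) (g : J -> I) F :
  lsum (map g L) F = lsum L (fun j => F (g j)).
Proof. unfold lsum; rewrite map_map; reflexivity. Qed.

Lemma exchange_lsum {I J : Type} (L : list I) (K : list J) (F : I -> J -> R) :
  lsum L (fun i => lsum K (fun j => F i j)) =
  lsum K (fun j => lsum L (fun i => F i j)).
Proof.
  induction L.
  - rewrite lsum_nil; transitivity (lsum K (fun _ => 0)).
    + rewrite lsum_const; ring.
    + apply lsum_ext; reflexivity.
  - rewrite lsum_cons, IHL, <- lsum_plus.
    apply lsum_ext; intro; rewrite lsum_cons; ring.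
Qed.

Lemma lsum_mul {I J : Type} (L : list I) (K : list J) F G :
  lsum L F * lsum K G = lsum L (fun i => lsum K (fun j => F i * G j)).
Proof.
  rewrite Rmult_comm, <- lsum_scal; apply lsum_ext; intro i.
  rewrite Rmult_comm, <- lsum_scal; apply lsum_ext; intro; ring.
Qed.

Lemma lsum_list_prod {I J : Type} (L : list I) (K : list J) (F : I -> J -> R) :
  lsum (list_prod L K) (fun p => F (fst p) (snd p)) =
  lsum L (fun i => lsum K (fun j => F i j)).
Proof.
  induction L; simpl list_prod; [reflexivity|].
  rewrite lsum_cons, lsum_app, lsum_map, IHL; reflexivity.
Qed.

Lemma lsum_sq {I : Type} (L : list I) (F : I -> R) :
  lsum L F ^ 2 = lsum L (fun i => lsum L (fun j => F i * F j)).
Proof. rewrite <- lsum_mul; ring. Qed.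

(* Lagrange's identity: the difference of the two sides is
   (1/2) sum_{i,j} (F i G j - F j G i)^2. *)
Lemma cauchy_schwarz_lsum {I : Type} (L : list I) (F G : I -> R) :
  lsum L (fun i => F i * G i) ^ 2 <=
  lsum L (fun i => F i ^ 2) * lsum L (fun i => G i ^ 2).
Proof.
  assert (Hsq : 0 <= lsum L (fun i => lsum L (fun j =>
                      (F i * G j - F j * G i) ^ 2))).
  { apply lsum_nonneg; intro; apply lsum_nonneg; intro; apply pow2_ge_0. }
  assert (Hlagrange :
    lsum L (fun i => lsum L (fun j => (F i * G j - F j * G i) ^ 2)) =
      lsum L (fun i => lsum L (fun j => F i ^ 2 * G j ^ 2))
    + lsum L (fun i => lsum L (fun j => G i ^ 2 * F j ^ 2))
    - 2 * lsum L (fun i => lsum L (fun j => (F i * G i) * (F j * G j)))).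
  { rewrite <- lsum_scal, <- lsum_plus, <- lsum_minus; apply lsum_ext; intro.
    rewrite <- lsum_scal, <- lsum_plus, <- lsum_minus; apply lsum_ext; intro.
    ring. }
  rewrite <- !lsum_mul in Hlagrange; nra.
Qed.

Lemma cauchy_schwarz_bounded {I : Type} (L : list I) (u v : I -> R) :
  (forall i, Rabs (u i) <= 1) ->
  lsum L (fun i => u i * v i) ^ 2 <= INR (length L) * lsum L (fun i => v i ^ 2).
Proof.
  intro Hu.
  assert (Hu2 : lsum L (fun i => u i ^ 2) <= INR (length L)).
  { rewrite <- (Rmult_1_l (INR _)), <- lsum_const; apply lsum_le; intro i.
    rewrite <- pow2_abs; specialize (Hu i); pose proof (Rabs_pos (u i)); nra. }
  assert (Hv2 : 0 <= lsum L (fun i => v i ^ 2)).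
  { apply lsum_nonneg; intro; apply pow2_ge_0. }
  eapply Rle_trans; [apply cauchy_schwarz_lsum|].
  apply Rmult_le_compat_r; assumption.
Qed.

Section BoxInequality.

Context {I : Type} (L : list I) (c : I -> I -> R).

Definition column_corr (j j' : I) : R := lsum L (fun i => c i j * c i j').

Definition box_sum : R :=
  lsum L (fun i => lsum L (fun j => lsum L (fun k => lsum L (fun p =>
    c i j * c k j * c i p * c k p)))).

Lemma sum_sq_column_corr :
  lsum (list_prod L L) (fun q => column_corr (fst q) (snd q) ^ 2) = box_sum.
Proof.
  rewrite (lsum_list_prod L L (fun j j' => column_corr j j' ^ 2)).
  unfold column_corr; setoid_rewrite lsum_sq.
  transitivity (lsum L (fun j => lsum L (fun i =>
    lsum L (fun p => lsum L (fun k => c i j * c i p * (c k j * c k p)))))).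
  { apply lsum_ext; intro; apply exchange_lsum. }
  rewrite exchange_lsum; unfold box_sum.
  apply lsum_ext; intro i; apply lsum_ext; intro j.
  rewrite exchange_lsum; apply lsum_ext; intro k; apply lsum_ext; intro p.
  ring.
Qed.

Lemma box_sum_nonneg : 0 <= box_sum.
Proof.
  rewrite <- sum_sq_column_corr; apply lsum_nonneg; intro; apply pow2_ge_0.
Qed.

Lemma sum_sq_row_sum (b : I -> R) :
  lsum L (fun i => lsum L (fun j => b j * c i j) ^ 2) =
  lsum (list_prod L L) (fun q =>
    (b (fst q) * b (snd q)) * column_corr (fst q) (snd q)).
Proof.
  rewrite (lsum_list_prod L L (fun j j' => (b j * b j') * column_corr j j')).
  setoid_rewrite lsum_sq; rewrite exchange_lsum; apply lsum_ext; intro j.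
  rewrite exchange_lsum; apply lsum_ext; intro j'.
  unfold column_corr; rewrite <- lsum_scal; apply lsum_ext; intro; ring.
Qed.

Theorem box_cauchy_schwarz (a b : I -> R) :
  (forall i, Rabs (a i) <= 1) -> (forall j, Rabs (b j) <= 1) ->
  lsum L (fun i => lsum L (fun j => a i * b j * c i j)) ^ 4 <=
  INR (length L) ^ 4 * box_sum.
Proof.
  intros Ha Hb.
  set (n := INR (length L)).
  set (A := lsum L (fun i => lsum L (fun j => a i * b j * c i j))).
  set (E := lsum (list_prod L L) (fun q =>
    (b (fst q) * b (snd q)) * column_corr (fst q) (snd q))).
  assert (HA : A ^ 2 <= n * E).
  { unfold E; rewrite <- sum_sq_row_sum.
    replace A with (lsum L (fun i => a i * lsum L (fun j => b j * c i j))).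
    - apply cauchy_schwarz_bounded, Ha.
    - apply lsum_ext; intro; rewrite <- lsum_scal; apply lsum_ext; intro; ring. }
  assert (HE : E ^ 2 <= n ^ 2 * box_sum).
  { rewrite <- sum_sq_column_corr.
    replace (n ^ 2) with (INR (length (list_prod L L)))
      by (rewrite length_prod, mult_INR; unfold n; ring).
    apply cauchy_schwarz_bounded; intro q.
    rewrite Rabs_mult; pose proof (Rabs_pos (b (fst q))).
    pose proof (Hb (fst q)); pose proof (Hb (snd q)); nra. }
  assert (HnE : 0 <= n * E) by (pose proof (pow2_ge_0 A); lra).
  replace (A ^ 4) with ((A ^ 2) ^ 2) by ring.
  apply Rle_trans with ((n * E) ^ 2).
  - apply pow_incr; split; [apply pow2_ge_0 | exact HA].
  - replace ((n * E) ^ 2) with (n ^ 2 * E ^ 2) by ring.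
    replace (n ^ 4 * box_sum) with (n ^ 2 * (n ^ 2 * box_sum)) by ring.
    apply Rmult_le_compat_l; [apply pow2_ge_0 | exact HE].
Qed.

End BoxInequality.

Lemma zsum_shift (i M : Z) (G : Z -> R) :
  zsum (- i) (M - i) (fun k => G (i + k)%Z) = zsum 0 M G.
Proof.
  unfold zsum, zrange.
  replace (M - i - - i + 1)%Z with (M - 0 + 1)%Z by ring.
  rewrite !map_map; f_equal; apply map_ext; intro; f_equal; ring.
Qed.

Lemma length_zrange (N : nat) : length (zrange 0 (Z.of_nat N - 1)) = N.
Proof.
  unfold zrange; rewrite length_map, length_seq.
  replace (Z.of_nat N - 1 - 0 + 1)%Z with (Z.of_nat N) by ring.
  apply Nat2Z.id.
Qed.

Lemma SN_box_sum {X : Type} (S Sinv T Tinv : X -> X) (f : X -> R)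
  (N : nat) (x : X) :
  SN S Sinv T Tinv f N x =
  Rabs (/ INR N ^ 4 * box_sum (zrange 0 (Z.of_nat N - 1))
                        (fun a b => f (zpow S Sinv a (zpow T Tinv b x)))).
Proof.
  unfold SN; do 2 f_equal.
  set (M := (Z.of_nat N - 1)%Z).
  set (c := fun a b => f (zpow S Sinv a (zpow T Tinv b x))).
  apply lsum_ext; intro i; apply lsum_ext; intro j.
  transitivity (zsum (- i) (M - i) (fun k =>
    zsum 0 M (fun p => c i j * c (i + k)%Z j * c i p * c (i + k)%Z p))).
  { apply lsum_ext; intro k.
    exact (zsum_shift j M (fun p =>
      c i j * c (i + k)%Z j * c i p * c (i + k)%Z p)). }
  exact (zsum_shift i M (fun k =>
    zsum 0 M (fun p => c i j * c k j * c i p * c k p))).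
Qed.

(* Also valid for n = 0, where both sides vanish since [/ 0 = 0]. *)
Lemma normalized_pow4_le (n A Q : R) :
  0 <= Q -> A ^ 4 <= n ^ 4 * Q -> (/ n ^ 2 * A) ^ 4 <= / n ^ 4 * Q.
Proof.
  intros HQ HA.
  destruct (Req_dec n 0) as [-> | Hn].
  - replace (0 ^ 2) with 0 by ring; replace (0 ^ 4) with 0 by ring.
    rewrite Rinv_0; lra.
  - replace ((/ n ^ 2 * A) ^ 4) with (/ n ^ 4 * (/ n ^ 4 * A ^ 4))
      by (field; exact Hn).
    replace Q with (/ n ^ 4 * (n ^ 4 * Q)) by (field; exact Hn).
    assert (Hinv : 0 <= / n ^ 4).
    { apply Rlt_le, Rinv_0_lt_compat.
      pose proof (Rsqr_pos_lt n Hn); unfold Rsqr in *; nra. }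
    apply Rmult_le_compat_l; [exact Hinv|].
    apply Rmult_le_compat_l; [exact Hinv | exact HA].
Qed.

Theorem lemma5p4 :
  exists C : R, C > 0 /\
  forall (X : Type) (S Sinv T Tinv : X -> X),
    (forall x, S (Sinv x) = x) -> (forall x, Sinv (S x) = x) ->
    (forall x, T (Tinv x) = x) -> (forall x, Tinv (T x) = x) ->
    (forall x, S (T x) = T (S x)) ->
    forall f1 f2 f3 : X -> R,
    (forall x, Rabs (f1 x) <= 1) ->
    (forall x, Rabs (f2 x) <= 1) ->
    (forall x, Rabs (f3 x) <= 1) ->
    forall (x : X) (N : nat),
      (avg3 S Sinv T Tinv f1 f2 f3 N x) ^ 4 <= C * SN S Sinv T Tinv f3 N x.
Proof.
  exists 1; split; [lra|].
  intros X S Sinv T Tinv _ _ _ _ _ f1 f2 f3 H1 H2 _ x N.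
  rewrite Rmult_1_l, SN_box_sum.
  set (L := zrange 0 (Z.of_nat N - 1)).
  set (c := fun a b => f3 (zpow S Sinv a (zpow T Tinv b x))).
  eapply Rle_trans; [|apply Rle_abs].
  apply normalized_pow4_le; [apply box_sum_nonneg|].
  pose proof (box_cauchy_schwarz L c (fun i => f1 (zpow S Sinv i x))
    (fun j => f2 (zpow T Tinv j x)) (fun _ => H1 _) (fun _ => H2 _)) as Hbox.
  unfold L in Hbox; rewrite length_zrange in Hbox; exact Hbox.
Qed.
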